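(* Let $\lambda_1,\lambda_2\in\mathbb{C}\setminus\{0,-1,-2,\dots\}$, let $\alpha\in\mathbb{C}\setminus\{-1,-2,\dots\}$, and set $\beta=\lambda_1+\lambda_2-\alpha-2$. On $W=V_{\lambda_1}\otimes V_{\lambda_2}$ put $H^{(1)}=H\otimes\mathbb{I}$, $H^{(2)}=\mathbb{I}\otimes H$ and define $$\Delta(H)=H^{(1)}+H^{(2)},\qquad \Delta(E)=E\otimes\mathbb{I}+\mathbb{I}\otimes E,$$ $$\Delta(F)=(H^{(1)}-\lambda_1+2\alpha+2)(H^{(1)}+\lambda_1)^{-1}(F\otimes\mathbb{I})+(H^{(2)}-\lambda_2+2\beta+2)(H^{(2)}+\lambda_2)^{-1}(\mathbb{I}\otimes F)$$ (the diagonal operators $H^{(i)}+\lambda_i$ are invertible on $W$). Then (a) these operators satisfy the $sl_2$ relations $[\Delta(H),\Delta(E)]=2\Delta(E)$, $[\Delta(H),\Delta(F)]=-2\Delta(F)$, $[\Delta(E),\Delta(F)]=\Delta(H)$, i.e. they define a representation of $sl_2$ on $W$; and (b) for all integers $0\le k\le N$, the vectors $w_{k,N}=\sum_{n=0}^N R_n(k,N)\,|\lambda_1,n\rangle\otimes|\lambda_2,N-n\rangle$ satisfy $\Delta(H)w_{k,N}=(\lambda_1+\lambda_2+2N)w_{k,N}$, $\Delta(E)w_{k,N}=w_{k,N+1}$ and $\Delta(F)w_{k,N}=-(N-k)(N+k+\lambda_1+\lambda_2-1)\,w_{k,N-1}$ (with $w_{k,k-1}=0$); i.e. the $R_n(k,N)$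 are Clebsch–Gordan coefficients for this generalized coproduct of $sl_2$.
   Context: $sl_2$ is generated by $H,E,F$ with $[H,E]=2E$, $[H,F]=-2F$, $[E,F]=H$. For $\lambda\in\mathbb{C}$, $V_\lambda$ is the lowest-weight Verma module with basis $\{|\lambda,n\rangle:n\ge0\}$ and action $H|\lambda,n\rangle=(\lambda+2n)|\lambda,n\rangle$, $E|\lambda,n\rangle=|\lambda,n+1\rangle$, $F|\lambda,n\rangle=-n(n+\lambda-1)|\lambda,n-1\rangle$. The functions $R_n(k,N)$ (proportional to dual Hahn polynomials) are $$R_n(k,N)=\binom{N}{n}\,{}_3F_2\!\left(\begin{matrix}-k,\ k+\alpha+\beta+1,\ -n\\ \alpha+1,\ -N\end{matrix}\;\Big|\;1\right),$$ the terminating series $\sum_{j=0}^{\min(n,k)}\frac{(-k)_j(k+\alpha+\beta+1)_j(-n)_j}{j!(\alpha+1)_j(-N)_j}$ with $(a)_j=a(a+1)\cdots(a+j-1)$. Operator products mean composition. *)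

(* The scalar field is an arbitrary numClosedFieldType C
   (the MathComp abstraction of the complex numbers; e.g. R[i]). *)
From HB Require Import structures.
From mathcomp Require Import all_boot all_order all_algebra.
Set Implicit Arguments. Unset Strict Implicit. Unset Printing Implicit Defensive.
Import Order.TTheory GRing.Theory Num.Theory.
Local Open Scope ring_scope.

Section Defs.
Variable C : numClosedFieldType.

(* A vector of W = V_{l1} (x) V_{l2} is given by its coefficients:
   v n m is the coefficient of |l1,n> (x) |l2,m>. Elements of the (algebraic)
   tensor product are the finitely supported ones. *)
Definition W := nat -> nat -> C.

Definition fin_supp (v : W) : Prop :=
  exists B : nat, forall n m, (B <= n + m)%N -> v n m = 0.

Definition addW (v w : W) : W := fun n m => v n m + w n m.
Definition subW (v w : W) : W := fun n m => v n m - w n m.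
Definition scaleW (c : C) (v : W) : W := fun n m => c * v n m.
Definition zeroW : W := fun _ _ => 0.

(* sl2 action on the lowest weight Verma module V_l, acting on factor 1 / 2.
   H|l,n> = (l+2n)|l,n>, E|l,n> = |l,n+1>, F|l,n> = -n(n+l-1)|l,n-1>. *)
Definition H1 (l : C) (v : W) : W := fun n m => (l + (2 * n)%:R) * v n m.
Definition H2 (l : C) (v : W) : W := fun n m => (l + (2 * m)%:R) * v n m.
Definition E1 (v : W) : W := fun n m => if n is n'.+1 then v n' m else 0.
Definition E2 (v : W) : W := fun n m => if m is m'.+1 then v n m' else 0.
(* coefficient of |n> in F v is  -(n+1)(n+l) times coefficient of |n+1> in v *)
Definition F1 (l : C) (v : W) : W :=
  fun n m => - (n.+1%:R * (n%:R + l)) * v n.+1 m.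
Definition F2 (l : C) (v : W) : W :=
  fun n m => - (m.+1%:R * (m%:R + l)) * v n m.+1.

(* The inverses of the diagonal operators H^(i) + l_i (eigenvalue 2 l_i + 2n
   on |n>, nonzero when l_i is not in {0,-1,-2,...}). *)
Definition invH1pl (l : C) (v : W) : W := fun n m => (l + (2 * n)%:R + l)^-1 * v n m.
Definition invH2pl (l : C) (v : W) : W := fun n m => (l + (2 * m)%:R + l)^-1 * v n m.

Definition DH (l1 l2 : C) (v : W) : W := addW (H1 l1 v) (H2 l2 v).
Definition DE (v : W) : W := addW (E1 v) (E2 v).
Definition DF (l1 l2 a b : C) (v : W) : W :=
  addW
    (let u := invH1pl l1 (F1 l1 v) in
     subW (addW (H1 l1 u) (scaleW (2 * a + 2) u)) (scaleW l1 u))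
    (let u := invH2pl l2 (F2 l2 v) in
     subW (addW (H2 l2 u) (scaleW (2 * b + 2) u)) (scaleW l2 u)).

Definition poch (a : C) (j : nat) : C := \prod_(i < j) (a + i%:R).

Definition Rcoef (a b : C) (n k N : nat) : C :=
  'C(N, n)%:R *
  \sum_(j < (minn n k).+1)
     (poch (- k%:R) j * poch (k%:R + a + b + 1) j * poch (- n%:R) j)
     / (j`!%:R * poch (a + 1) j * poch (- N%:R) j).

Definition wvec (a b : C) (k N : nat) : W :=
  fun n m => if (n + m == N)%N then Rcoef a b n k N else 0.

End Defs.

From HB Require Import structures.
From mathcomp Require Import all_boot all_order all_algebra.
From mathcomp Require Import ring zify.
From Stdlib Require Import FunctionalExtensionality.
Set Implicit Arguments. Unset Strict Implicit. Unset Printing Implicit Defensive.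
Import Order.TTheory GRing.Theory Num.Theory.
Local Open Scope ring_scope.

(* On coefficients, DF is the difference operator
     (DF v)(n, m) = -(n+1)(n+a+1) v(n+1, m) - (m+1)(m+b+1) v(n, m+1),
   the factor -(n+1)(n+l) of F on |l,n+1> cancelling against (H + l)^-1; the sl2
   relations are then identities between coefficients, the last one using
   a + b + 2 = l1 + l2.
   Since 'C(N, n) (-n)_j / (-N)_j = 'C(N - j, n - j), the coefficient R_n(k, N) is
   sum_(j <= k) c_j 'C(N - j, n - j) with c_j = (-k)_j (k+a+b+1)_j / (j! (a+1)_j).
   In this form DE w_{k,N} = w_{k,N+1} is Pascal's rule, and a three-term identity
   between the binomials reduces the DF equation to the summation by parts
     sum_j c_j (j - k)(j + k + a + b + 1) x_(j+1) = sum_j c_j j (j + a) x_j,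
   which holds because c_(j+1) (j+1)(j+a+1) = c_j (j-k)(j+k+a+b+1) and c_(k+1) = 0. *)

Definition bin_sub (N n j : nat) : nat := if (j <= n)%N then 'C(N - j, n - j) else 0.

Lemma bin_subSS (N n j : nat) : bin_sub N.+1 n.+1 j.+1 = bin_sub N n j.
Proof. by rewrite /bin_sub ltnS !subSS. Qed.

Lemma bin_sub0 (N j : nat) : bin_sub N 0 j = (j == 0)%N.
Proof. by case: j => [|j]; rewrite /bin_sub ?bin0. Qed.

Lemma bin_sub_small (N n j : nat) : (j <= N < n)%N -> bin_sub N n j = 0%N.
Proof. by move=> /andP[jN Nn]; rewrite /bin_sub; case: ifP => // _; apply: bin_small; lia. Qed.

Lemma bin_subS (N n j : nat) : (j <= N)%N ->
  bin_sub N.+1 n.+1 j = (bin_sub N n j + bin_sub N n.+1 j)%N.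
Proof.
move=> jN; rewrite /bin_sub; case: (leqP j n) => jn.
  by rewrite leqW // !subSn // binS addnC.
case: (leqP j n.+1) => // jn1.
have -> : j = n.+1 by lia.
by rewrite subnn !bin0.
Qed.

Lemma mul_bin_sub_down (N n j : nat) : (j < N)%N ->
  ((n - j) * bin_sub N n j = (N - j) * bin_sub N n j.+1)%N.
Proof.
move=> jN; rewrite /bin_sub; case: (ltngtP j n) => jn.
- have -> : (N - j = (N - j.+1).+1)%N by lia.
  have -> : (n - j = (n - j.+1).+1)%N by lia.
  by rewrite mul_bin_diag.
- by rewrite !muln0.
- by rewrite jn subnn mul0n muln0.
Qed.

Section BinomialIdentities.
Variable R : numFieldType.

Lemma natr_bin_sub_down (N n j : nat) : (j < N)%N ->
  (j%:R - n%:R) * (bin_sub N n j)%:R = (j%:R - N%:R) * (bin_sub N n j.+1)%:R :> R.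
Proof.
move=> jN; case: (leqP j n) => jn; last first.
  by rewrite /bin_sub leqNgt jn leqNgt ltnS (ltnW jn) !mulr0.
have := congr1 (fun x : nat => x%:R : R) (@mul_bin_sub_down N n j jN).
rewrite /= !natrM !natrB ?(ltnW jN) // => down.
by rewrite -opprB mulNr down -mulNr opprB.
Qed.

Lemma bin_three_term (a b : R) (j p m : nat) :
  (j + p).+1%:R * ((j + p)%:R + a + 1) * 'C((p + m).+1, p.+1)%:R
  + m.+1%:R * (m%:R + b + 1) * 'C((p + m).+1, p)%:R
  = ((j + p + m).+1%:R * ((j + p + m).+1%:R + a + b + 1)
     - j%:R * (j%:R + a + b + 1)) * 'C(p + m, p)%:R
    + j%:R * (j%:R + a) * 'C((p + m).+1, p.+1)%:R.
Proof.
have binSS : 'C((p + m).+1, p.+1)%:R = (p + m).+1%:R * 'C(p + m, p)%:R / p.+1%:R :> R.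
  by rewrite -natrM mul_bin_diag natrM mulrAC mulfV ?mul1r ?pnatr_eq0.
have binS0 : 'C((p + m).+1, p)%:R = (p + m).+1%:R * 'C(p + m, p)%:R / m.+1%:R :> R.
  have down := mul_bin_down (p + m).+1 p; rewrite /= subSn ?leq_addr // addKn in down.
  by rewrite -natrM down natrM mulrAC mulfV ?mul1r ?pnatr_eq0.
rewrite binSS binS0; field.
by rewrite !nat1r !pnatr_eq0.
Qed.

Lemma bin_sub_three_term (a b : R) (n m j : nat) :
  n.+1%:R * (n%:R + a + 1) * (bin_sub (n + m).+1 n.+1 j)%:R
  + m.+1%:R * (m%:R + b + 1) * (bin_sub (n + m).+1 n j)%:R
  = ((n + m).+1%:R * ((n + m).+1%:R + a + b + 1) - j%:R * (j%:R + a + b + 1))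
      * (bin_sub (n + m) n j)%:R
    + j%:R * (j%:R + a) * (bin_sub (n + m).+1 n.+1 j)%:R.
Proof.
case: (leqP j n) => jn.
  have [p ->] : exists p, n = (j + p)%N by exists (n - j)%N; lia.
  have -> : bin_sub (j + p + m).+1 (j + p).+1 j = 'C((p + m).+1, p.+1).
    by rewrite /bin_sub ifT; [congr 'C(_, _); lia | lia].
  have -> : bin_sub (j + p + m).+1 (j + p) j = 'C((p + m).+1, p).
    by rewrite /bin_sub ifT; [congr 'C(_, _); lia | lia].
  have -> : bin_sub (j + p + m) (j + p) j = 'C(p + m, p).
    by rewrite /bin_sub ifT; [congr 'C(_, _); lia | lia].
  exact: bin_three_term.
have -> : bin_sub (n + m).+1 n j = 0%N by rewrite /bin_sub leqNgt jn.
have -> : bin_sub (n + m) n j = 0%N by rewrite /bin_sub leqNgt jn.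
rewrite !mulr0 add0r addr0 /bin_sub.
case: (leqP j n.+1) => jn1; last by rewrite mulr0n !mulr0.
have -> : j = n.+1 by lia.
by rewrite subnn bin0; ring.
Qed.

End BinomialIdentities.

Section Hypergeometric.
Variables (C : numClosedFieldType) (a b : C).
Hypothesis ha : forall n : nat, a != - n.+1%:R.

Lemma pochS (x : C) (j : nat) : poch x j.+1 = poch x j * (x + j%:R).
Proof. by rewrite /poch big_ord_recr. Qed.

Lemma poch_neq0 (x : C) (j : nat) :
  (forall i : nat, (i < j)%N -> x + i%:R != 0) -> poch x j != 0.
Proof. by move=> xi; apply/prodf_neq0 => i _; apply: xi. Qed.

Lemma pochN_neq0 (N j : nat) : (j <= N)%N -> poch (- N%:R : C) j != 0.
Proof.
move=> jN; apply: poch_neq0 => i ij.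
by rewrite addrC subr_eq0 eqr_nat; apply/eqP; lia.
Qed.

Lemma bin_sub_poch (N n j : nat) : (j <= N)%N ->
  (bin_sub N n j)%:R = 'C(N, n)%:R * poch (- n%:R) j / poch (- N%:R) j :> C.
Proof.
move=> jN; apply: (canRL (mulfK (pochN_neq0 jN))); rewrite mulrC.
elim: j jN => [|j IH] jN; first by rewrite /poch !big_ord0 mul1r mulr1 /bin_sub !subn0.
rewrite !pochS mulrA -IH ?(ltnW jN) // -!mulrA; congr (_ * _).
by rewrite [RHS]mulrC !(addrC (- _)) natr_bin_sub_down.
Qed.

Definition hyp_coef (k j : nat) : C :=
  poch (- k%:R) j * poch (k%:R + a + b + 1) j / (j`!%:R * poch (a + 1) j).

Definition Rsum (k N n : nat) : C := \sum_(j < k.+1) hyp_coef k j * (bin_sub N n j)%:R.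

Lemma Rcoef_Rsum (n k N : nat) : (k <= N)%N -> Rcoef a b n k N = Rsum k N n.
Proof.
move=> kN; have mk : (minn n k < k.+1)%N by rewrite ltnS geq_minr.
have -> : Rsum k N n = \sum_(j < (minn n k).+1) hyp_coef k j * (bin_sub N n j)%:R.
  rewrite /Rsum (big_ord_widen k.+1 (fun j => hyp_coef k j * (bin_sub N n j)%:R) mk).
  rewrite [RHS]big_mkcond /=; apply: eq_bigr => j _; case: ifP => // jnk.
  have nj : (n < j)%N by move: (ltn_ord j) (negbT jnk); rewrite -leqNgt; lia.
  by rewrite /bin_sub leqNgt nj mulr0.
rewrite /Rcoef mulr_sumr; apply: eq_bigr => j _.
have jN : (j <= N)%N by apply: leq_trans kN; rewrite -ltnS (leq_trans _ mk).
by rewrite (bin_sub_poch n jN) /hyp_coef !invfM; ring.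
Qed.

Lemma Rsum0 (k N : nat) : Rsum k N 0 = 1.
Proof.
rewrite /Rsum big_ord_recl big1 => [|j _]; last by rewrite bin_sub0 mulr0.
by rewrite addr0 bin_sub0 /hyp_coef /poch !big_ord0 /= fact0; field.
Qed.

Lemma Rsum_small (k N : nat) : (k <= N)%N -> Rsum k N N.+1 = 0.
Proof.
move=> kN; rewrite /Rsum big1 // => j _.
by rewrite bin_sub_small ?mulr0 // leqnn andbT (leq_trans _ kN) // -ltnS.
Qed.

Lemma RsumS (k N n : nat) : (k <= N)%N ->
  Rsum k N.+1 n.+1 = Rsum k N n + Rsum k N n.+1.
Proof.
move=> kN; rewrite /Rsum -big_split; apply: eq_bigr => j _ /=.
by rewrite bin_subS ?natrD ?mulrDr // (leq_trans _ kN) // -ltnS.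
Qed.

Lemma hyp_coefS (k j : nat) :
  hyp_coef k j.+1 * (j.+1%:R * (j%:R + a + 1))
  = hyp_coef k j * ((j%:R - k%:R) * (j%:R + k%:R + a + b + 1)).
Proof.
have a1_neq0 i : a + 1 + i%:R != 0.
  by rewrite -addrA nat1r addr_eq0 ha.
have pa_neq0 : poch (a + 1) j != 0 by apply: poch_neq0 => i _.
have fact_neq0 : (j`!%:R : C) != 0 by rewrite pnatr_eq0 -lt0n fact_gt0.
have j1_neq0 : (j.+1%:R : C) != 0 by rewrite pnatr_eq0.
rewrite /hyp_coef !pochS factS natrM; field.
by rewrite pa_neq0 fact_neq0 a1_neq0 nat1r j1_neq0.
Qed.

Lemma hyp_coef_over (k : nat) : hyp_coef k k.+1 = 0.
Proof. by rewrite /hyp_coef pochS addNr mulr0 !mul0r. Qed.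

Lemma sum_hyp_coef_by_parts (k : nat) (x : nat -> C) :
  \sum_(j < k.+1) hyp_coef k j * ((j%:R - k%:R) * (j%:R + k%:R + a + b + 1)) * x j.+1
  = \sum_(j < k.+1) hyp_coef k j * (j%:R * (j%:R + a)) * x j.
Proof.
pose G (j : nat) := hyp_coef k j * (j%:R * (j%:R + a)) * x j.
have G0 : G 0%N = 0 by rewrite /G mul0r mulr0 mul0r.
have Gk : G k.+1 = 0 by rewrite /G hyp_coef_over !mul0r.
have GS j : G j.+1 = hyp_coef k j * ((j%:R - k%:R) * (j%:R + k%:R + a + b + 1)) * x j.+1.
  by rewrite /G -hyp_coefS -natr1; ring.
have : \sum_(j < k.+2) G j = \sum_(j < k.+2) G j by [].
rewrite [LHS]big_ord_recl [RHS]big_ord_recr /= G0 Gk add0r addr0 => sumG.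
by rewrite -[RHS]/(\sum_(j < k.+1) G j) -sumG; apply: eq_bigr => j _; rewrite -GS.
Qed.

Lemma Rsum_three_term (k n m : nat) :
  n.+1%:R * (n%:R + a + 1) * Rsum k (n + m).+1 n.+1
  + m.+1%:R * (m%:R + b + 1) * Rsum k (n + m).+1 n
  = ((n + m).+1%:R - k%:R) * ((n + m).+1%:R + k%:R + a + b + 1) * Rsum k (n + m) n.
Proof.
set N := (n + m).+1; rewrite /Rsum !mulr_sumr.
transitivity (\sum_(j < k.+1)
  (hyp_coef k j * (N%:R * (N%:R + a + b + 1) - j%:R * (j%:R + a + b + 1))
     * (bin_sub (n + m) n j)%:R
   + hyp_coef k j * (j%:R * (j%:R + a)) * (bin_sub N n.+1 j)%:R)).
  rewrite -big_split; apply: eq_bigr => j _ /=.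
  transitivity (hyp_coef k j * (n.+1%:R * (n%:R + a + 1) * (bin_sub N n.+1 j)%:R
                + m.+1%:R * (m%:R + b + 1) * (bin_sub N n j)%:R)); first by ring.
  by rewrite bin_sub_three_term /N; ring.
rewrite big_split /= -(sum_hyp_coef_by_parts k (fun j => (bin_sub N n.+1 j)%:R)).
by rewrite -big_split; apply: eq_bigr => j _ /=; rewrite bin_subSS; ring.
Qed.

End Hypergeometric.

Lemma W_ext (C : numClosedFieldType) (v w : W C) : (forall n m, v n m = w n m) -> v = w.
Proof. by move=> vw; do 2![apply: functional_extensionality => ?]; apply: vw. Qed.

Lemma weight_add_neq0 (C : numClosedFieldType) (l : C) :
  (forall n : nat, l != - n%:R) -> forall n : nat, l + (2 * n)%:R + l != 0.
Proof.
move=> hl n; have -> : l + (2 * n)%:R + l = 2 * (l + n%:R) by rewrite natrM; ring.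
by rewrite mulf_eq0 negb_or pnatr_eq0 addr_eq0 hl.
Qed.

Section Coproduct.
Variables (C : numClosedFieldType) (l1 l2 a b : C).
Hypotheses (hl1 : forall n : nat, l1 != - n%:R) (hl2 : forall n : nat, l2 != - n%:R).
Hypothesis ha : forall n : nat, a != - n.+1%:R.

Lemma DFE (v : W C) (n m : nat) :
  DF l1 l2 a b v n m = - (n.+1%:R * (n%:R + a + 1)) * v n.+1 m
                       - (m.+1%:R * (m%:R + b + 1)) * v n m.+1.
Proof.
have := weight_add_neq0 hl1 n; have := weight_add_neq0 hl2 m.
rewrite /DF /addW /subW /scaleW /H1 /H2 /invH1pl /invH2pl /F1 /F2 !natrM => h2 h1.
by field; rewrite h1 h2.
Qed.

Lemma DH_DE_commutator (v : W C) :
  subW (DH l1 l2 (DE v)) (DE (DH l1 l2 v)) = scaleW 2 (DE v).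
Proof.
apply: W_ext => n m; rewrite /subW /DH /DE /addW /H1 /H2 /E1 /E2 /scaleW.
by case: n => [|n]; case: m => [|m]; rewrite ?natrM; ring.
Qed.

Lemma DH_DF_commutator (v : W C) :
  subW (DH l1 l2 (DF l1 l2 a b v)) (DF l1 l2 a b (DH l1 l2 v))
  = scaleW (-2) (DF l1 l2 a b v).
Proof. by apply: W_ext => n m; rewrite /subW /DH /addW /H1 /H2 /scaleW !DFE !natrM; ring. Qed.

Lemma DE_DF_commutator (hb : b = l1 + l2 - a - 2) (v : W C) :
  subW (DE (DF l1 l2 a b v)) (DF l1 l2 a b (DE v)) = DH l1 l2 v.
Proof.
apply: W_ext => n m; rewrite /subW /DE /addW /E1 /E2 /DH /addW /H1 /H2.
by case: n => [|n]; case: m => [|m]; rewrite !DFE /E1 /E2 hb ?natrM; ring.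
Qed.

Lemma wvecE (k N : nat) : (k <= N)%N -> forall n m : nat,
  wvec a b k N n m = if (n + m == N)%N then Rsum a b k N n else 0.
Proof. by move=> kN n m; rewrite /wvec Rcoef_Rsum. Qed.

Lemma DH_wvec (k N : nat) :
  DH l1 l2 (wvec a b k N) = scaleW (l1 + l2 + (2 * N)%:R) (wvec a b k N).
Proof.
apply: W_ext => n m; rewrite /DH /addW /H1 /H2 /scaleW /wvec.
by case: eqP => [<- | _]; rewrite ?mulr0 ?addr0 // !natrM natrD; ring.
Qed.

Lemma DE_wvec (k N : nat) : (k <= N)%N -> DE (wvec a b k N) = wvec a b k N.+1.
Proof.
move=> kN; apply: W_ext => n m; rewrite /DE /addW /E1 /E2.
case: n => [|n]; case: m => [|m]; rewrite ?(wvecE kN) (wvecE (leqW kN)).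
all: rewrite ?addr0 ?add0r ?addn0 ?add0n ?addSn ?addnS ?eqSS //.
- by rewrite !Rsum0.
- by case: eqP => [-> | _] //; rewrite RsumS // Rsum_small // addr0.
- by case: eqP => _; rewrite ?RsumS ?addr0.
Qed.

Lemma DF_wvec (k N : nat) : (k <= N)%N ->
  DF l1 l2 a b (wvec a b k N)
  = scaleW (- ((N - k)%:R * (N%:R + k%:R + a + b + 1)))
           (if (k < N)%N then wvec a b k N.-1 else zeroW C).
Proof.
move=> kN; apply: W_ext => n m.
rewrite DFE /scaleW !(wvecE kN) addSn addnS.
case: (eqVneq (n + m).+1 N) => [eN | nmN]; last first.
  rewrite !mulr0 subrr; case: ltnP => kN' /=; last by rewrite /zeroW mulr0.
  rewrite /wvec; case: eqP => [nmN1 | _]; last by rewrite mulr0.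
  by exfalso; move/eqP: nmN; lia.
subst N.
transitivity (- (n.+1%:R * (n%:R + a + 1) * Rsum a b k (n + m).+1 n.+1
                 + m.+1%:R * (m%:R + b + 1) * Rsum a b k (n + m).+1 n)); first by ring.
rewrite (Rsum_three_term b ha) natrB // mulNr.
case: ltnP => /= kNm; first by rewrite (wvecE (kNm : k <= n + m)%N) eqxx.
have -> : k = (n + m).+1 by lia.
by rewrite subrr !mul0r.
Qed.

End Coproduct.

Theorem mainTheorem3 (C : numClosedFieldType) (l1 l2 a : C)
  (hl1 : forall n : nat, l1 != - n%:R)
  (hl2 : forall n : nat, l2 != - n%:R)
  (ha : forall n : nat, a != - n.+1%:R) :
  let b := l1 + l2 - a - 2 in
  (* (a) sl2 relations on W *)
  (forall v : W C, fin_supp v ->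
     [/\ subW (DH l1 l2 (DE v)) (DE (DH l1 l2 v)) = scaleW 2 (DE v),
         subW (DH l1 l2 (DF l1 l2 a b v)) (DF l1 l2 a b (DH l1 l2 v))
           = scaleW (-2) (DF l1 l2 a b v)
       & subW (DE (DF l1 l2 a b v)) (DF l1 l2 a b (DE v)) = DH l1 l2 v]) /\
  (* (b) Clebsch-Gordan vectors *)
  (forall k N : nat, (k <= N)%N ->
     [/\ DH l1 l2 (wvec a b k N) = scaleW (l1 + l2 + (2 * N)%:R) (wvec a b k N),
         DE (wvec a b k N) = wvec a b k N.+1
       & DF l1 l2 a b (wvec a b k N)
           = scaleW (- ((N - k)%:R * (N%:R + k%:R + l1 + l2 - 1)))
                    (if (k < N)%N then wvec a b k N.-1 else zeroW C)]).
Proof.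
move=> b; split=> [v _ | k N kN]; split.
- exact: DH_DE_commutator.
- by apply: DH_DF_commutator.
- by apply: DE_DF_commutator.
- exact: DH_wvec.
- exact: DE_wvec.
- rewrite DF_wvec //; congr (scaleW (- (_ * _)) _).
  by rewrite /b; ring.
Qed.
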